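(* Let $\gamma:\mathbb{R}/2\pi\mathbb{Z}\to\mathbb{R}^4$, $\gamma(t)=(\cos t,\sin t,\cos 2t,\sin 2t)$, where $\mathbb{R}^4$ carries its standard symplectic structure. Then the outer symplectic billiard correspondence with respect to (the image of) $\gamma$ has no non-degenerate $4$-periodic orbits.
   Context: For a closed curve (1-dimensional submanifold) $M\subset\mathbb{R}^4$ with symplectic form $\omega$, two points $z,z'$ are in outer symplectic billiard correspondence if $Q=\tfrac12(z+z')\in M$ and $\omega(z'-z,\zeta)=0$ for all $\zeta\in T_QM$. A $4$-periodic orbit is a tuple $(z_1,z_2,z_3,z_4)$ with $z_i,z_{i+1}$ in correspondence for $i=1,\dots,4$ (indices mod $4$); it is non-degenerate if there is no $i$ with $z_{i-1}=z_{i+1}$ (indices mod 4). *)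

From Stdlib Require Import Reals.
From Coquelicot Require Import Coquelicot.
Open Scope R_scope.

(* Points of R^4, coordinates (x1, y1, x2, y2). *)
Record R4 := mkR4 { c1 : R; c2 : R; c3 : R; c4 : R }.

Definition R4add (u v : R4) : R4 :=
  mkR4 (c1 u + c1 v) (c2 u + c2 v) (c3 u + c3 v) (c4 u + c4 v).
Definition R4sub (u v : R4) : R4 :=
  mkR4 (c1 u - c1 v) (c2 u - c2 v) (c3 u - c3 v) (c4 u - c4 v).
Definition R4scal (a : R) (u : R4) : R4 :=
  mkR4 (a * c1 u) (a * c2 u) (a * c3 u) (a * c4 u).

Definition omega (u v : R4) : R :=
  c1 u * c2 v - c2 u * c1 v + c3 u * c4 v - c4 u * c3 v.

Definition gamma (t : R) : R4 := mkR4 (cos t) (sin t) (cos (2 * t)) (sin (2 * t)).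

Definition dgamma (t : R) : R4 :=
  mkR4 (Derive (fun s => c1 (gamma s)) t) (Derive (fun s => c2 (gamma s)) t)
       (Derive (fun s => c3 (gamma s)) t) (Derive (fun s => c4 (gamma s)) t).

Definition onM (Q : R4) : Prop := exists t, Q = gamma t.

Definition tangentM (t : R) (zeta : R4) : Prop := exists s : R, zeta = R4scal s (dgamma t).

Definition osb_corr (z z' : R4) : Prop :=
  exists t : R, R4scal (1/2) (R4add z z') = gamma t /\
    forall zeta, tangentM t zeta -> omega (R4sub z' z) zeta = 0.

Definition periodic4 (z1 z2 z3 z4 : R4) : Prop :=
  osb_corr z1 z2 /\ osb_corr z2 z3 /\ osb_corr z3 z4 /\ osb_corr z4 z1.

(* Non-degenerate: no i with z_{i-1} = z_{i+1} (indices mod 4). *)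
Definition nondegenerate4 (z1 z2 z3 z4 : R4) : Prop :=
  z4 <> z2 /\ z1 <> z3 /\ z2 <> z4 /\ z3 <> z1.

(* Only the midpoint condition matters: each step of the correspondence is the
   point reflection through some gamma t, and four point reflections compose to
   the identity only if gamma t1 + gamma t3 = gamma t2 + gamma t4.  In complex
   coordinates gamma t = (a, a^2) with a = e^{it}, so a1 + a3 = a2 + a4 and
   a1^2 + a3^2 = a2^2 + a4^2; eliminating a4 leaves 2 (a1 - a2) (a2 - a3) = 0.
   If gamma t1 = gamma t2 then z3 = z1, and if gamma t2 = gamma t3 then z4 = z2. *)

From Stdlib Require Import Reals Lra Classical.
From Coquelicot Require Import Coquelicot.
Open Scope R_scope.

Lemma Cmult_integral (x y : C) : (x * y = 0)%C -> x = 0%C \/ y = 0%C.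
Proof.
  intros Hxy.
  destruct (classic (x = 0%C)) as [Hx | Hx]; [now left | right].
  replace y with (/ x * (x * y))%C by (field; exact Hx).
  rewrite Hxy; ring.
Qed.

Lemma C_sum_sq_eq (a b c d : C) :
  (a + c = b + d)%C -> (a * a + c * c = b * b + d * d)%C -> a = b \/ b = c.
Proof.
  intros Hsum Hsq.
  assert (Hd : d = (a + c - b)%C) by (rewrite Hsum; ring).
  rewrite Hd in Hsq.
  assert (Hfactor : (RtoC 2 * ((a - b) * (b - c)) = 0)%C).
  { transitivity (a * a + c * c - (b * b + (a + c - b) * (a + c - b)))%C;
      [ring | rewrite Hsq; ring]. }
  destruct (Cmult_integral _ _ Hfactor) as [H2 | Hprod].
  - apply (f_equal fst) in H2; simpl in H2; lra.
  - destruct (Cmult_integral _ _ Hprod) as [Hab | Hbc]; [left | right].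
    + replace a with ((a - b) + b)%C by ring; rewrite Hab; ring.
    + replace b with ((b - c) + c)%C by ring; rewrite Hbc; ring.
Qed.

Definition R4_of_C2 (u v : C) : R4 := mkR4 (Re u) (Im u) (Re v) (Im v).

Lemma R4add_C2 (u v u' v' : C) :
  R4add (R4_of_C2 u v) (R4_of_C2 u' v') = R4_of_C2 (u + u') (v + v').
Proof. reflexivity. Qed.

Lemma R4_of_C2_inj (u v u' v' : C) :
  R4_of_C2 u v = R4_of_C2 u' v' -> u = u' /\ v = v'.
Proof.
  destruct u, v, u', v'; unfold R4_of_C2; simpl.
  intros E; injection E; intros; subst; auto.
Qed.

Definition circle (t : R) : C := (cos t, sin t).

Lemma gamma_C2 (t : R) : gamma t = R4_of_C2 (circle t) (circle t * circle t).
Proof.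
  unfold gamma, R4_of_C2, circle; simpl.
  rewrite cos_2a, sin_2a; f_equal; ring.
Qed.

Lemma gamma_sum_eq t1 t2 t3 t4 :
  R4add (gamma t1) (gamma t3) = R4add (gamma t2) (gamma t4) ->
  gamma t1 = gamma t2 \/ gamma t2 = gamma t3.
Proof.
  rewrite !gamma_C2, !R4add_C2; intros E.
  destruct (R4_of_C2_inj _ _ _ _ E) as [Hsum Hsq].
  destruct (C_sum_sq_eq _ _ _ _ Hsum Hsq) as [Ht | Ht]; [left | right];
    rewrite Ht; reflexivity.
Qed.

Definition reflect_at (p z : R4) : R4 := R4sub (R4scal 2 p) z.

Lemma reflect_atK (p z : R4) : reflect_at p (reflect_at p z) = z.
Proof. destruct p, z; unfold reflect_at, R4sub, R4scal; simpl; f_equal; ring. Qed.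

Lemma reflect_at_cycle4 (p1 p2 p3 p4 z1 z2 z3 z4 : R4) :
  z2 = reflect_at p1 z1 -> z3 = reflect_at p2 z2 ->
  z4 = reflect_at p3 z3 -> z1 = reflect_at p4 z4 ->
  R4add p1 p3 = R4add p2 p4.
Proof.
  intros -> -> -> E.
  destruct p1, p2, p3, p4, z1; unfold reflect_at, R4add, R4sub, R4scal in *; simpl in *.
  injection E; intros; f_equal; lra.
Qed.

Lemma osb_corr_reflect z z' : osb_corr z z' -> exists t, z' = reflect_at (gamma t) z.
Proof.
  intros [t [Hmid _]]; exists t; rewrite <- Hmid.
  destruct z, z'; unfold reflect_at, R4sub, R4scal, R4add; simpl; f_equal; field.
Qed.

Theorem mainTheorem6 :
  ~ (exists z1 z2 z3 z4 : R4, periodic4 z1 z2 z3 z4 /\ nondegenerate4 z1 z2 z3 z4).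
Proof.
  intros (z1 & z2 & z3 & z4 & (H12 & H23 & H34 & H41) & (N42 & N13 & _ & _)).
  destruct (osb_corr_reflect _ _ H12) as [t1 E2].
  destruct (osb_corr_reflect _ _ H23) as [t2 E3].
  destruct (osb_corr_reflect _ _ H34) as [t3 E4].
  destruct (osb_corr_reflect _ _ H41) as [t4 E1].
  destruct (gamma_sum_eq t1 t2 t3 t4 (reflect_at_cycle4 _ _ _ _ _ _ _ _ E2 E3 E4 E1))
    as [G | G].
  - apply N13; rewrite E3, E2, G, reflect_atK; reflexivity.
  - apply N42; rewrite E4, E3, G, reflect_atK; reflexivity.
Qed.
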